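(* Let $d\ge 3$ and $u>0$. For any sets $A,B\subseteq\mathbb R^d$, the event $$\{A\stackrel{\mathcal V}{\longleftrightarrow}B\}=\{\omega\in\Omega:\text{there is a continuous path }p:[0,1]\to\mathcal V(\omega)\text{ with }p(0)\in A,\ p(1)\in B\}$$ belongs to the $\sigma$-algebra $\mathcal A$.
   Context: $\mathbb L$ is the set of lines in $\mathbb R^d$, with the topology making $\gamma:e_1^\perp\times SO_d\to\mathbb L$, $\gamma(x,\vartheta)=\vartheta(x+\mathbb R e_1)$, continuous (finest such topology) and its Borel $\sigma$-algebra. $\Omega$ is the set of locally finite point measures $\omega=\sum_i\delta_{l_i}$ on $\mathbb L$ (finite on compact sets), and $\mathcal A$ is the $\sigma$-algebra on $\Omega$ generated by the evaluation maps $\omega\mapsto\omega(A)$, $A$ Borel in $\mathbb L$. For $l\in\mathbb L$, $C(l)=l+\overline{B(0,1)}$. For $\omega\in\Omega$, $\mathcal L(\omega)=\bigcup_{l\in\operatorname{supp}\omega}C(l)$ and the vacant set is $\mathcal V(\omega)=\mathbb R^d\setminus\mathcal L(\omega)$. *)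

From HB Require Import structures.
From mathcomp Require Import all_boot all_order all_algebra.
From mathcomp Require Import all_classical all_reals all_analysis.
From mathcomp Require Import measurable_realfun.
Set Implicit Arguments. Unset Strict Implicit. Unset Printing Implicit Defensive.
Import Order.TTheory GRing.Theory Num.Theory.
Import numFieldNormedType.Exports.
Local Open Scope classical_set_scope.
Local Open Scope ring_scope.

Section Lines.
Context (R : realType) (d : nat).

Definition e1 : 'rV[R]_d := \row_(i < d) (if val i == 0%N then 1 else 0).

Definition enorm (v : 'rV[R]_d) : R := Num.sqrt (\sum_(i < d) v ord0 i ^+ 2).

Definition is_line (S : set 'rV[R]_d) : Prop :=
  exists (a v : 'rV[R]_d), v != 0 /\ S = [set a + t *: v | t in [set: R]].

Definition line := {S : set 'rV[R]_d | is_line S}.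
HB.instance Definition _ := gen_eqMixin line.
HB.instance Definition _ := gen_choiceMixin line.

Definition e1perp (x : 'rV[R]_d) : Prop := x *m e1^T = 0.
Definition SOd (th : 'M[R]_d) : Prop := th *m th^T = 1%:M /\ \det th = 1.
Definition gdom : set ('rV[R]_d * 'M[R]_d) := [set p | e1perp p.1 /\ SOd p.2].

(* gamma(x, theta) = theta (x + R e_1)  (theta acting on column vectors) *)
Definition gamma_set (p : 'rV[R]_d * 'M[R]_d) : set 'rV[R]_d :=
  [set (p.1 + t *: e1) *m p.2^T | t in [set: R]].

(* gamma^{-1}(U) as a subset of the subspace gdom (set_type carries the
   subspace topology). *)
Definition gamma_pre (U : set line) : set (set_type gdom) :=
  [set p | exists2 l, U l & sval l = gamma_set (set_val p)].

Definition line_open (U : set line) : Prop := open (gamma_pre U).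

Lemma e1_neq0 : (0 < d)%N -> e1 != 0.
Proof.
move=> dpos; apply/negP => /eqP /rowP /(_ (Ordinal dpos)).
by rewrite !mxE /= => /eqP; rewrite oner_eq0.
Qed.

Lemma gamma_line (p : 'rV[R]_d * 'M[R]_d) : (0 < d)%N -> SOd p.2 ->
  is_line (gamma_set p).
Proof.
case: p => x th /= dpos [hth _].
exists (x *m th^T), (e1 *m th^T); split.
  apply/negP => /eqP h.
  have : e1 *m th^T *m th = e1 by rewrite -mulmxA (mulmx1C hth) mulmx1.
  by rewrite h mul0mx => /esym /eqP; apply/negP; exact: e1_neq0.
apply/seteqP; split => y [t _ <-]; exists t => //=;
  by rewrite mulmxDl scalemxAl.
Qed.

Lemma line_openT : line_open setT.
Proof.
rewrite /line_open.
have [d0|dpos] := posnP d.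
  suff -> : gamma_pre setT = set0 by exact: open0.
  apply/seteqP; split => // p [[S [a [v [vn0 _]]]] _ _].
  move: vn0; rewrite (_ : v = 0) ?eqxx //; apply/matrixP => i j.
  by have := ltn_ord j; rewrite {2}d0.
suff -> : gamma_pre setT = setT by exact: openT.
apply/seteqP; split => // p _.
have /set_mem [_ hth] := valP p.
by exists (exist _ _ (gamma_line dpos hth)).
Qed.

Lemma line_sval_inj (l1 l2 : line) : sval l1 = sval l2 -> l1 = l2.
Proof.
case: l1 l2 => S1 h1 [S2 h2] /= e; subst S2.
by congr exist; exact: Prop_irrelevance.
Qed.

Lemma line_openI : setI_closed line_open.
Proof.
move=> A B oA oB; rewrite /line_open.
suff -> : gamma_pre (A `&` B) = gamma_pre A `&` gamma_pre B by exact: openI.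
apply/seteqP; split => p.
  by case=> l [Al Bl] e; split; exists l.
case=> -[l1 Al1 e1'] [l2 Bl2 e2']; exists l1 => //; split => //.
by rewrite (line_sval_inj (etrans e1' (esym e2'))).
Qed.

Lemma line_open_bigU (I : Type) (f : I -> set line) :
  (forall i, line_open (f i)) -> line_open (\bigcup_i f i).
Proof.
move=> of_; rewrite /line_open.
suff -> : gamma_pre (\bigcup_i f i) = \bigcup_i gamma_pre (f i).
  by apply: bigcup_open => i _; exact: of_.
apply/seteqP; split => p.
  by case=> l [i _ fil] e; exists i => //; exists l.
by case=> i _ [l fil e]; exists l => //; exists i.
Qed.

HB.instance Definition _ :=
  isOpenTopological.Build line line_openT line_openI line_open_bigU.

End Lines.

Section Vacant.
Context (R : realType) (d : nat).
Local Notation L := (line R d).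

Definition cyl (l : L) : set 'rV[R]_d :=
  [set y | exists2 x, sval l x & enorm (y - x) <= 1].

Definition borel_L : set (set L) := <<s [set: L], open >>.

(* omega = sum_{i in I} delta_{l_i}, I countable (possibly finite or empty);
   omega is represented by its values on all subsets of L *)
Definition point_measure (w : set L -> \bar R) : Prop :=
  exists (I : set nat) (l : nat -> L),
    forall A : set L, w A = (\esum_(i in I) (\1_A (l i) : R)%:E)%E.

Definition locally_finite (w : set L -> \bar R) : Prop :=
  forall K : set L, compact K -> (w K < +oo)%E.

Definition Omega : set (set L -> \bar R) :=
  [set w | point_measure w /\ locally_finite w].

Definition eval_preimages : set (set (set L -> \bar R)) :=
  [set E | exists (A : set L) (B : set (\bar R)),
     [/\ borel_L A, measurable B & E = Omega `&` ((fun w => w A) @^-1` B)]].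

Definition calA : set (set (set L -> \bar R)) := <<s Omega, eval_preimages >>.

Definition supp (w : set L -> \bar R) : set L := [set l | (0 < w [set l])%E].

Definition occupied (w : set L -> \bar R) : set 'rV[R]_d :=
  \bigcup_(l in supp w) cyl l.

Definition vacant (w : set L -> \bar R) : set 'rV[R]_d := ~` occupied w.

Definition vconnect (A B : set 'rV[R]_d) : set (set L -> \bar R) :=
  [set w | Omega w /\
     exists p : R -> 'rV[R]_d,
       [/\ {within `[0, 1], continuous p},
           (forall t, t \in `[0, 1] -> vacant w (p t)),
           A (p 0) & B (p 1)]].

End Vacant.

From HB Require Import structures.
From mathcomp Require Import all_boot all_order all_algebra.
From mathcomp Require Import all_classical all_reals all_analysis.
From mathcomp Require Import measurable_realfun.
From mathcomp Require Import ring lra.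
Import Order.TTheory GRing.Theory Num.Theory.
Import numFieldNormedType.Exports.
Local Open Scope classical_set_scope.
Local Open Scope ring_scope.

(* The vacant set is open: only finitely many cylinders of a locally finite
   configuration come near a given point, because the lines meeting a bounded
   region form a compact set (they are parametrized by a compact subset of
   e1^perp x SO_d).  A path in an open subset of R^d can be covered by a finite
   chain of balls with rational centers and radii 1/(n+1), each contained in
   the set, consecutive ones intersecting; conversely such a chain carries a
   polygonal path.  Hence {A <-V-> B} is the countable union, over the chains
   leading from A to B, of the events {omega(H) = 0}, where H is the set of
   lines whose cylinder meets the union of the balls of the chain.  This set
   of lines is open, so each such event is one of the generators of calA. *)

(** * Paths and chains of sets *)

Section path_in.
Context {R : realType} {V : normedModType R}.

Definition path_in (W : set V) (x y : V) : Prop := exists p : R -> V,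
  [/\ continuous p, (forall t, 0 <= t <= 1 -> W (p t)), p 0 = x & p 1 = y].

Lemma path_in_sub (W W' : set V) x y : W `<=` W' -> path_in W x y -> path_in W' x y.
Proof. by move=> WW' [p [cp pW p0 p1]]; exists p; split=> // t /pW /WW'. Qed.

Lemma ball_convex (c x y : V) (r u : R) : ball c r x -> ball c r y ->
  0 <= u <= 1 -> ball c r ((1 - u) *: x + u *: y).
Proof.
rewrite -!ball_normE /= => cx cy /andP[u0 u1].
have -> : c - ((1 - u) *: x + u *: y) = (1 - u) *: (c - x) + u *: (c - y).
  by rewrite !scalerBr addrACA -scalerDl subrK scale1r opprD.
apply: le_lt_trans (ler_normD _ _) _.
rewrite !normrZ (ger0_norm u0) (@ger0_norm _ (1 - u)) ?subr_ge0 //.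
have : Num.max `|c - x| `|c - y| < r by rewrite gt_max cx cy.
have : `|c - x| <= Num.max `|c - x| `|c - y| by rewrite le_max lexx.
have : `|c - y| <= Num.max `|c - x| `|c - y| by rewrite le_max lexx orbT.
set m := Num.max _ _; nra.
Qed.

Lemma path_in_ball (c x y : V) (r : R) : ball c r x -> ball c r y ->
  path_in (ball c r) x y.
Proof.
move=> cx cy; exists (fun u => (1 - u) *: x + u *: y); split.
- move=> u; apply: cvgD; apply: cvgZr_tmp => //.
  by apply: cvgB; [exact: cvg_cst|exact: cvg_id].
- by move=> u; exact: ball_convex.
- by rewrite subr0 scale1r scale0r addr0.
- by rewrite subrr scale0r scale1r add0r.
Qed.

(* [p] runs on [[0, 1/2]] and [q] on [[1/2, 1]]: both clamped
   reparametrizations are continuous on all of [R], and their sum minus the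
   junction point [y] is the concatenation. *)
Lemma path_in_trans (W : set V) x y z :
  path_in W x y -> path_in W y z -> path_in W x z.
Proof.
move=> [p [cp pW p0 p1]] [q [cq qW q0 q1]].
pose lo (t : R) := Order.min (2 * t) 1; pose hi (t : R) := Order.max (2 * t - 1) 0.
have c2 : continuous (fun t : R => 2 * t).
  by move=> t; apply: cvgM; [exact: cvg_cst|exact: cvg_id].
have clo : continuous lo.
  move=> t; apply: (@continuous_min R R (fun t => 2 * t) (fun=> 1)).
    exact: c2.
  exact: cst_continuous.
have chi : continuous hi.
  move=> t; apply: (@continuous_max R R (fun t => 2 * t - 1) (fun=> 0)).
    by apply: cvgB; [exact: c2|exact: cvg_cst].
  exact: cst_continuous.
exists (fun t => p (lo t) + q (hi t) - y); split.
- move=> t; apply: cvgB; last exact: cvg_cst.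
  by apply: cvgD; apply: continuous_comp;
    [exact: clo|exact: cp|exact: chi|exact: cq].
- move=> t /andP[t0 t1]; rewrite /lo /hi; have [th|th] := leP t 2^-1.
    rewrite (_ : Order.min _ _ = 2 * t); last by apply/min_idPl; lra.
    rewrite (_ : Order.max _ _ = 0); last by apply/max_idPr; lra.
    by rewrite q0 addrK; apply: pW; apply/andP; split; lra.
  rewrite (_ : Order.min _ _ = 1); last by apply/min_idPr; lra.
  rewrite (_ : Order.max _ _ = 2 * t - 1); last by apply/max_idPl; lra.
  by rewrite p1 addrC addKr; apply: qW; apply/andP; split; lra.
- rewrite /lo /hi mulr0 (_ : Order.min _ _ = 0); last by apply/min_idPl; lra.
  rewrite (_ : Order.max _ _ = 0); last by apply/max_idPr; lra.
  by rewrite p0 q0 addrK.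
- rewrite /lo /hi mulr1 (_ : 2 - 1 = 1 :> R); last lra.
  rewrite (_ : Order.min _ _ = 1); last by apply/min_idPr; lra.
  rewrite (_ : Order.max _ _ = 1); last by apply/max_idPl; lra.
  by rewrite p1 q1 addrC addKr.
Qed.

End path_in.

Section chains.
Context {T : Type} {I : eqType} (b : I -> set T).

Definition meets (s t : I) : bool := `[< b s `&` b t !=set0 >].

Definition chain_in (W : set T) (x y : T) (s : I) (r : seq I) : Prop :=
  [/\ b s x, path meets s r, {in s :: r, forall t, b t `<=` W} & b (last s r) y].

Lemma chain_in_sub (W W' : set T) x y s r :
  W `<=` W' -> chain_in W x y s r -> chain_in W' x y s r.
Proof. by move=> WW' [sx sr rW ry]; split=> // t /rW /subset_trans; apply. Qed.

Lemma chain_in_rcons (W : set T) x y z s r t : chain_in W x y s r ->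
  b t y -> b t z -> b t `<=` W -> chain_in W x z s (rcons r t).
Proof.
move=> [bx sr rW ry] ty tz tW; split => //.
- by rewrite rcons_path sr; apply/asboolP; exists y.
- by move=> u; rewrite -rcons_cons mem_rcons inE => /predU1P[->|/rW].
- by rewrite last_rcons.
Qed.

End chains.

Section connected_chain.
Context {T : topologicalType} {I : eqType} (b : I -> set T).
Hypothesis b_open : forall i, open (b i).

(* The points of [C] reachable from [x] by a chain form a nonempty subset of
   [C] that is both open and closed in [C]. *)
Lemma connected_chain (W C : set T) x y :
  (forall z, W z -> exists2 i, b i z & b i `<=` W) ->
  connected C -> C `<=` W -> C x -> C y -> exists s r, chain_in b W x y s r.
Proof.
move=> W_base cC CW Cx Cy.
pose reach := [set z | exists s r, chain_in b W x z s r].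
suff /seteqP[_ /(_ y Cy) [] //] : C `&` reach = C.
apply: cC.
- have [s sx sW] := W_base x (CW x Cx).
  by exists x; split => //; exists s, [::]; split => // t; rewrite inE => /eqP->.
- exists reach => //; rewrite openE => z [s [r [sx sr rW rz]]].
  apply: filterS (open_nbhs_nbhs (conj (b_open (last s r)) rz)) => z' rz'.
  by exists s, r; split.
- pose dead := \bigcup_(t in [set t | b t `<=` W /\ b t `&` reach = set0]) b t.
  exists (~` dead); first by rewrite closedC; apply: bigcup_open => t _.
  apply/seteqP; split => z [Cz zz]; split => //.
    by case=> t [_ treach] tz; have : (b t `&` reach) z by []; rewrite treach.
  have [t tz tW] := W_base z (CW z Cz).
  have [z' [tz' [s [r chain]]]] : b t `&` reach !=set0.
    by apply/set0P/eqP => treach; apply: zz; exists t.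
  by exists s, (rcons r t); exact: chain_in_rcons chain tz' tz tW.
Qed.

End connected_chain.

Section chain_path_in.
Context {R : realType} {V : normedModType R} {I : eqType} (b : I -> set V).
Hypothesis b_path : forall i x y, b i x -> b i y -> path_in (b i) x y.

Lemma chain_path_in (W : set V) x y s r : chain_in b W x y s r -> path_in W x y.
Proof.
elim: r s x => [|t r IHr] s x [sx /= sr rW ry].
  by apply: path_in_sub _ (b_path _ _ _ sx ry); apply: rW; rewrite inE eqxx.
move: sr => /andP[/asboolP[z [sz tz]] tr].
apply: (@path_in_trans _ _ _ _ z).
  by apply: path_in_sub _ (b_path _ _ _ sx sz); apply: rW; rewrite inE eqxx.
by apply: (IHr t); split => // u ur; apply: rW; rewrite inE ur orbT.
Qed.

End chain_path_in.

Lemma filter_bigI_finite (T : Type) (I : choiceType) (F : set_system T)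
    (D : set I) (g : I -> set T) :
  Filter F -> finite_set D -> (forall i, D i -> F (g i)) ->
  F (\bigcap_(i in D) g i).
Proof.
move=> FF fD Dg; rewrite -(fset_setK fD); apply: filter_bigI => i.
by rewrite in_fset_set // => /set_mem; exact: Dg.
Qed.

Lemma sigma_algebra_bigcup_countable {T : Type} (D : set T) (G : set (set T))
    (I : countType) (J : set I) (F : I -> set T) :
  (forall i, J i -> <<s D, G >> (F i)) -> <<s D, G >> (\bigcup_(i in J) F i).
Proof.
move=> JF; pose H n := if unpickle n is Some i then
  if `[< J i >] then F i else set0 else set0.
rewrite (_ : \bigcup_(i in J) F i = \bigcup_n H n).
  apply: sigma_algebra_bigcup => n; rewrite /H.
  case: unpickle => [i|]; last exact: sigma_algebra0.
  by case: asboolP => [/JF|_] //; exact: sigma_algebra0.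
apply/seteqP; split=> [x [i Ji Fix]|x [n _]]; rewrite /H.
  by exists (pickle i) => //; rewrite pickleK; case: asboolP.
by case: unpickle => [i|] //; case: asboolP => // Ji Fix; exists i.
Qed.

Section indicator_sums.
Import finmap.
Context {R : realType} {X : Type} (I : set nat) (f : nat -> X).

Lemma esum_indic_eq0 (A : set X) :
  (\esum_(i in I) (\1_A (f i) : R)%:E = 0)%E <-> (forall i, I i -> ~ A (f i)).
Proof.
split=> [sum0 i Ii Afi|notA]; last first.
  by apply: esum1 => i /notA Afi; rewrite indicE memNset.
have : (1%:E <= \esum_(i in I) (\1_A (f i) : R)%:E)%E.
  apply: esum_ge; exists [set i]; first by split=> [|j ->]; [exact: finite_set1|].
  by rewrite fsbig_set1 indicE mem_set.
by rewrite sum0 lee_fin ler10.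
Qed.

Lemma esum_indic_finite (A : set X) :
  (\esum_(i in I) (\1_A (f i) : R)%:E < +oo)%E ->
  finite_set [set i | I i /\ A (f i)].
Proof.
move=> sum_fin; apply: contrapT => infinite.
have sum_ge n : ((n%:R)%:E <= \esum_(i in I) (\1_A (f i) : R)%:E)%E.
  have [J JA nJ] := infinite_set_fset n infinite.
  apply: esum_ge; exists [set` J].
    by split=> [|i /JA[]//]; exact: finite_fset.
  rewrite fsbig_finite ?finite_fset // set_fsetK.
  rewrite (@eq_big_seq _ _ _ _ _ _ (fun _ => 1%:E)); last first.
    by move=> i /JA[_ Afi]; rewrite indicE mem_set.
  rewrite sumEFin lee_fin.
  have -> : \sum_(i <- J) (1 : R) = (\sum_(i <- J) 1%N)%:R by rewrite natr_sum.
  by rewrite -card_fset_sum1 ler_nat.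
have sum_ge0 : (0 <= \esum_(i in I) (\1_A (f i) : R)%:E)%E.
  by apply: esum_ge0 => i _; rewrite lee_fin.
move: sum_fin sum_ge0 sum_ge.
case: (\esum_(i in I) _) => [r _ r0 /(_ (Num.Def.archi_bound r))| |] //.
by rewrite lee_fin leNgt archi_boundP // -lee_fin.
Qed.

End indicator_sums.

Section matrix_continuity.
Context {R : realType} {T : topologicalType}.

Lemma continuous_mx_entry {m n} {f : T -> 'M[R]_(m, n)} i j :
  continuous f -> continuous (fun x => f x i j).
Proof.
by move=> cf x; exact: continuous_comp (cf x) (@coord_continuous R m n i j (f x)).
Qed.

Lemma continuous_mx m n (f : T -> 'M[R]_(m, n)) :
  (forall i j, continuous (fun x => f x i j)) -> continuous f.
Proof.
move=> cf x; apply/cvg_ballP => e e0.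
have : \forall z \near x, forall i j, ball (f x i j) e (f z i j).
  by do 2 apply: filter_forall => ?; exact: cvg_ball (cf _ _ x) _ e0.
by apply: filterS => z fz; split.
Qed.

Lemma continuous_sum {I : Type} {s : seq I} {F : I -> T -> R} :
  (forall k, continuous (F k)) -> continuous (fun x => \sum_(k <- s) F k x).
Proof.
move=> cF; elim: s => [|k s IHs] x.
  by under eq_fun do rewrite big_nil; exact: cst_continuous.
by under eq_fun do rewrite big_cons; exact: cvgD (cF k x) (IHs x).
Qed.

Lemma continuous_prod {I : Type} {s : seq I} {F : I -> T -> R} :
  (forall k, continuous (F k)) -> continuous (fun x => \prod_(k <- s) F k x).
Proof.
move=> cF; elim: s => [|k s IHs] x.
  by under eq_fun do rewrite big_nil; exact: cst_continuous.
by under eq_fun do rewrite big_cons; exact: cvgM (cF k x) (IHs x).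
Qed.

End matrix_continuity.

Lemma norm_sum_le {R : realDomainType} n (F : 'I_n -> R) (B : R) :
  (forall k, `|F k| <= B) -> `|\sum_k F k| <= n%:R * B.
Proof.
move=> FB; apply: le_trans (ler_norm_sum _ _ _) _.
rewrite mulr_natl -[n in B *+ n]card_ord -sumr_const.
by apply: ler_sum => k _.
Qed.

Lemma normM_le1 {R : realDomainType} (x y B : R) :
  `|x| <= B -> `|y| <= 1 -> `|x * y| <= B.
Proof.
by rewrite normrM => xB y1; have := normr_ge0 x; have := normr_ge0 y; nra.
Qed.

Section euclidean.
Context {R : realType} {d : nat}.
Local Notation V := 'rV[R]_d.
Implicit Types u v w : V.

Definition dot u v : R := \sum_k u ord0 k * v ord0 k.

Lemma dot_ge0 u : 0 <= dot u u.
Proof. by apply: sumr_ge0 => k _; rewrite -expr2 sqr_ge0. Qed.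

Lemma dot_gt0 u : u != 0 -> 0 < dot u u.
Proof.
move=> u0; rewrite lt_neqAle dot_ge0 andbT; apply: contra u0 => /eqP uu0.
apply/eqP/rowP => k; rewrite mxE.
have sq0 j : 0 <= u ord0 j * u ord0 j by rewrite -expr2 sqr_ge0.
have /(_ k isT)/eqP := @psumr_eq0P R _ xpredT _ (fun j _ => sq0 j) (esym uu0).
by rewrite mulf_eq0 orbb => /eqP.
Qed.

Lemma dotZ (a : R) u : dot (a *: u) (a *: u) = a ^+ 2 * dot u u.
Proof. by rewrite /dot mulr_sumr; apply: eq_bigr => j _; rewrite !mxE; ring. Qed.

Lemma dotBZl u v w (a : R) : dot (u - a *: v) w = dot u w - a * dot v w.
Proof.
by rewrite /dot mulr_sumr -sumrB; apply: eq_bigr => j _; rewrite !mxE; ring.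
Qed.

Lemma dotBZ u v (a : R) :
  dot (u - a *: v) (u - a *: v) = dot u u - 2 * a * dot u v + a ^+ 2 * dot v v.
Proof.
rewrite /dot !mulr_sumr -sumrB -big_split.
by apply: eq_bigr => k _; rewrite !mxE /=; ring.
Qed.

Lemma mul_row_tr u v : u *m v^T = (dot u v)%:M.
Proof.
apply/matrixP => i j; rewrite (ord1 i) (ord1 j) !mxE /= mulr1n.
by apply: eq_bigr => k _; rewrite mxE.
Qed.

Lemma enorm_le1 u : enorm u <= 1 <-> dot u u <= 1.
Proof.
rewrite /enorm (_ : \sum_i u ord0 i ^+ 2 = dot u u); last first.
  by apply: eq_bigr => k _; rewrite expr2.
have := sqr_sqrtr (dot_ge0 u); have := sqrtr_ge0 (dot u u).
by set s := Num.sqrt _ => s0 <-; split=> h; nra.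
Qed.

Lemma dot_coord_le u k : u ord0 k * u ord0 k <= dot u u.
Proof.
by rewrite /dot (bigD1 k) //= lerDl sumr_ge0 // => j _; rewrite -expr2 sqr_ge0.
Qed.

Lemma unit_coord_le1 u k : dot u u <= 1 -> `|u ord0 k| <= 1.
Proof.
move=> u1; have := dot_coord_le u k.
by rewrite ler_norml => uk; apply/andP; split; nra.
Qed.

(* [line_dist2 a v z] is the squared distance from [z] to the line [a + R v],
   attained at the parameter [proj_coef (z - a) v]. *)
Definition proj_coef u v : R := dot u v / dot v v.

Definition line_dist2 (a v z : V) : R :=
  dot (z - a - proj_coef (z - a) v *: v) (z - a - proj_coef (z - a) v *: v).

Lemma dotBZ_min u v (t : R) : v != 0 ->
  dot (u - t *: v) (u - t *: v) =
  dot (u - proj_coef u v *: v) (u - proj_coef u v *: v)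
  + (t - proj_coef u v) ^+ 2 * dot v v.
Proof.
move=> v0; rewrite !dotBZ.
have -> : dot u v = proj_coef u v * dot v v by rewrite divfK // gt_eqF ?dot_gt0.
by move: (proj_coef u v) (dot v v) (dot u u) => a b c; ring.
Qed.

Lemma continuous_dot {T : topologicalType} {f g : T -> V} :
  continuous f -> continuous g -> continuous (fun x => dot (f x) (g x)).
Proof.
move=> cf cg; apply: continuous_sum => k x.
by apply: cvgM; [exact: continuous_mx_entry ord0 k cf x|
                 exact: continuous_mx_entry ord0 k cg x].
Qed.

Lemma continuous_line_dist2 a v : continuous (line_dist2 a v).
Proof.
have cu : continuous (fun z : V => z - a).
  move=> z; have ca : {for z, continuous (fun=> a)} by exact: cst_continuous.
  by have := continuousB (@cvg_id _ (nbhs z)) ca; exact.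
have cw : continuous (fun z : V => z - a - proj_coef (z - a) v *: v).
  move=> z; have cp : {for z, continuous (fun z : V => proj_coef (z - a) v)}.
    have cv : {for z, continuous (fun _ : V => (dot v v)^-1)}.
      exact: cst_continuous.
    by have := continuousM (continuous_dot cu (@cst_continuous _ _ v) z) cv; exact.
  by have := continuousB (cu z) (continuousZr_tmp (a := v) cp); exact.
exact: continuous_dot.
Qed.

End euclidean.

Section rational_balls.
Context {R : realType} {d : nat}.
Local Notation V := 'rV[R]_d.

Definition rball_index := ('rV[rat]_d * nat)%type.

Definition rball (s : rball_index) : set V :=
  ball (map_mx ratr s.1 : V) (s.2.+1%:R^-1).

Lemma rball_open s : open (rball s).
Proof. exact: ball_open. Qed.

Lemma rball_path_in s x y : rball s x -> rball s y -> path_in (rball s) x y.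
Proof. exact: path_in_ball. Qed.

Lemma rball_base (W : set V) y : open W -> W y ->
  exists2 s, rball s y & rball s `<=` W.
Proof.
move=> oW Wy; have /nbhs_ballP[e e0 eW] : nbhs y W by exact: open_nbhs_nbhs.
have [k ke] : exists k : nat, k.+1%:R^-1 < e / 2.
  have [k hk] := @ltr_add_invr R 0 (e / 2) ltac:(by rewrite divr_gt0).
  by exists k; rewrite add0r in hk.
set r : R := k.+1%:R^-1.
have r0 : 0 < r by rewrite invr_gt0.
have /choice[q qy] : forall j : 'I_d, exists q : rat, `|y ord0 j - ratr q| < r.
  move=> j; case: (@dense_rat R (ball (y ord0 j) r)).
  - by exists (y ord0 j); exact: ballxx.
  - exact: ball_open.
  - by move=> z [yz [q _ qz]]; exists q; rewrite qz; move: yz; rewrite -ball_normE.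
have ys : ball y r (map_mx ratr (\row_j q j) : V).
  by split => // i j; rewrite -ball_normE /= !mxE (ord1 i).
exists (\row_j q j, k).
  by apply: ball_sym; exact: ys.
move=> z sz; apply: eW; apply: le_ball (ball_triangle ys sz).
by move: ke; rewrite /= -/r; lra.
Qed.

End rational_balls.

Section point_measures.
Context {R : realType} {d : nat}.
Local Notation L := (line R d).
Implicit Type w : set L -> \bar R.

Lemma supp_point_measure {w} {I : set nat} {f : nat -> L} :
  (forall A, w A = \esum_(i in I) (\1_A (f i) : R)%:E)%E -> supp w = f @` I.
Proof.
move=> wE; apply/seteqP; split=> [l|_ [i Ii <-]]; rewrite /supp /= wE.
  apply: contraPP => notf; rewrite (proj2 (esum_indic_eq0 _ _ _)) ?ltxx //.
  by move=> i Ii fil; apply: notf; exists i.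
rewrite lt0e esum_ge0 ?andbT => [|j _]; last by rewrite lee_fin.
by apply/eqP => /esum_indic_eq0 /(_ i Ii); apply.
Qed.

Lemma Omega_null w H : Omega w -> w H = 0%E <-> (forall l, supp w l -> ~ H l).
Proof.
move=> [[I [f wE]] _]; rewrite wE esum_indic_eq0 (supp_point_measure wE).
by split=> [null _ [i Ii <-]|null i Ii]; [exact: null|apply: null; exists i].
Qed.

Lemma Omega_supp_finite w K : Omega w -> compact K -> finite_set (supp w `&` K).
Proof.
move=> [[I [f wE]] lf] cK; rewrite (supp_point_measure wE).
have := lf K cK; rewrite wE => /esum_indic_finite /(finite_image f).
by apply: sub_finite_set => _ [[i Ii <-] Kfi]; exists i.
Qed.

Definition hitting (S : set 'rV[R]_d) : set L := [set l | cyl l `&` S !=set0].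

Lemma hitting_null w S : Omega w -> w (hitting S) = 0%E <-> S `<=` vacant w.
Proof.
move=> Ow; rewrite Omega_null //.
split=> [null y Sy [l wl cly]|Svac l wl [y [cly Sy]]].
  by apply: (null l wl); exists y.
by apply: (Svac y Sy); exists l.
Qed.

End point_measures.

(** * Lines, cylinders and their parametrization *)

Section lines.
Context {R : realType} {d : nat}.
Local Notation V := 'rV[R]_d.
Local Notation M := 'M[R]_d.
Local Notation L := (line R d).

Lemma cyl_line_dist2 {l : L} {a v : V} : v != 0 ->
  sval l = [set a + t *: v | t in [set: R]] ->
  cyl l = [set z | line_dist2 a v z <= 1].
Proof.
move=> v0 lE; have vv0 := dot_gt0 _ v0; apply/seteqP; split=> z /=.
  case=> x; rewrite lE => -[t _ <-] /enorm_le1.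
  rewrite opprD addrA (dotBZ_min _ _ _ v0).
  by rewrite /line_dist2; have := sqr_ge0 (t - proj_coef (z - a) v); nra.
move=> za; exists (a + proj_coef (z - a) v *: v).
  by rewrite lE; exists (proj_coef (z - a) v).
by apply/enorm_le1; rewrite opprD addrA.
Qed.

Lemma closed_cyl (l : L) : closed (cyl l).
Proof.
have [a [v [v0 lE]]] := svalP l; rewrite (cyl_line_dist2 v0 lE).
apply: (@preimage_closed _ _ (line_dist2 a v) [set x | x <= 1]) => [z _|].
  exact: continuous_line_dist2.
exact: closed_le.
Qed.

Lemma continuous_fst_entry i j : continuous (fun p : V * M => p.1 i j).
Proof. by apply: continuous_mx_entry => p; exact: cvg_fst. Qed.

Lemma continuous_snd_entry i j : continuous (fun p : V * M => p.2 i j).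
Proof. by apply: continuous_mx_entry => p; exact: cvg_snd. Qed.

Definition line_point (t : R) (p : V * M) : V := (p.1 + t *: e1 R d) *m p.2^T.

Lemma continuous_line_point t : continuous (line_point t).
Proof.
apply: continuous_mx => i j.
have -> : (fun p => line_point t p i j) = fun p : V * M =>
    \sum_(k <- index_enum 'I_d) ((p.1 i k + t * e1 R d i k) * p.2 j k).
  by apply: funext => p; rewrite !mxE; apply: eq_bigr => k _; rewrite !mxE.
apply: continuous_sum => k p; apply: cvgM; last exact: continuous_snd_entry.
by apply: cvgD; [exact: continuous_fst_entry|exact: cvg_cst].
Qed.

(* Through [gamma], a line [l] hits [S] iff [line_point t p + z] lies in [S]
   for some [t] and some [z] in the closed unit ball. *)
Lemma open_hitting (S : set V) : (0 < d)%N -> open S -> open (hitting S).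
Proof.
move=> d0 oS; change (open (gamma_pre (hitting S))).
pose P := \bigcup_t \bigcup_(z in [set z | enorm z <= 1])
  (line_point t @^-1` [set v | S (v + z)]).
have oP : open P.
  apply: bigcup_open => t _; apply: bigcup_open => z _.
  apply: open_comp => [p _|]; first exact: continuous_line_point.
  apply: (@open_comp _ _ (fun v : V => v + z)) => // v _.
  have cz : {for v, continuous (fun=> z)} by exact: cst_continuous.
  by have := continuousD (@cvg_id _ (nbhs v)) cz; exact.
rewrite (_ : gamma_pre _ = set_val @^-1` P).
  by apply: open_comp => // p _; exact: initial_continuous.
apply/seteqP; split=> p.
  case=> l [y [[x lx xy] Sy]] lp; move: lx; rewrite lp => -[t _ xt].
  by exists t => //; exists (y - x) => //; rewrite /= /line_point xt addrC subrK.
case=> t _ [z z1 Sz]; have /set_mem[_ SOp] := valP p.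
exists (exist _ _ (gamma_line d0 SOp)) => //=.
exists (line_point t (set_val p) + z); split => //.
by exists (line_point t (set_val p)); [exists t|rewrite addrC addKr].
Qed.

End lines.

Section line_parameters.
Context {R : realType} {d : nat}.
Local Notation V := 'rV[R]_d.
Local Notation M := 'M[R]_d.
Local Notation L := (line R d).

Definition row_box n (Y : R) : set 'rV[R]_n := [set x | forall j, `|x ord0 j| <= Y].

Lemma compact_row_box n Y : compact (row_box n Y).
Proof.
rewrite (_ : row_box n Y =
    [set x | forall j, (fun=> `[- Y, Y]%classic) j (x ord0 j)]).
  exact: (@rV_compact _ n (fun=> `[- Y, Y]%classic)
    (fun _ => @segment_compact R _ _)).
by apply/seteqP; split=> x xY j; have := xY j; rewrite /= in_itv /= ler_norml.
Qed.

Definition mx_box : set M := [set th | forall i j, `|th i j| <= 1].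

Lemma compact_mx_box : compact mx_box.
Proof.
rewrite (_ : mx_box = vec_mx @` row_box (d * d) 1).
  apply: continuous_compact; last exact: compact_row_box.
  apply/continuous_subspaceT/continuous_mx => i j; rewrite (_ : (fun x => _) =
    fun x : 'rV[R]_(d * d) => x ord0 (mxvec_index i j)); last first.
    by apply: funext => x; rewrite mxE.
  exact: coord_continuous.
apply/seteqP; split=> [th th1|_ [x x1 <-] i j]; last by rewrite mxE.
exists (mxvec th); last exact: mxvecK.
by move=> k; case/mxvec_indexP: k => i j; rewrite mxvecE.
Qed.

Lemma continuous_det_snd : continuous (fun p : V * M => \det p.2).
Proof.
rewrite /determinant; apply: continuous_sum => s p.
have csign : {for p, continuous (fun _ : V * M => (-1) ^+ perm.odd_perm s : R)}.
  exact: cst_continuous.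
have cprod := @continuous_prod _ _ _ (index_enum 'I_d)
  (fun i (p : V * M) => p.2 i (perm.fun_of_perm s i))
  (fun i => continuous_snd_entry i _) p.
by have := continuousM csign cprod; exact.
Qed.

Lemma closed_gdom : closed (@gdom R d).
Proof.
have closed_eq_at (f : V * M -> R) c : continuous f -> closed [set p | f p = c].
  by move=> cf; apply: (@preimage_closed _ _ f [set x | x = c]) => // p _.
rewrite (_ : @gdom R d = [set p | (p.1 *m (e1 R d)^T) ord0 ord0 = 0]
  `&` (\bigcap_(ij in [set: 'I_d * 'I_d])
         [set p : V * M | (p.2 *m p.2^T) ij.1 ij.2 = (1%:M : M) ij.1 ij.2])
  `&` [set p | \det p.2 = 1]).
  apply: closedI; first apply: closedI.
  - apply: closed_eq_at; rewrite (_ : (fun p => _) = fun p : V * M =>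
      \sum_(k <- index_enum 'I_d) (p.1 ord0 k * (e1 R d)^T k ord0)).
      apply: continuous_sum => k p; apply: cvgM; last exact: cvg_cst.
      exact: continuous_fst_entry.
    by apply: funext => p; rewrite mxE.
  - apply: closed_bigI => -[i j] _; apply: closed_eq_at.
    rewrite (_ : (fun p => _) = fun p : V * M =>
      \sum_(k <- index_enum 'I_d) (p.2 i k * p.2 j k)).
      by apply: continuous_sum => k p; apply: cvgM; exact: continuous_snd_entry.
    by apply: funext => p; rewrite mxE; apply: eq_bigr => k _; rewrite mxE.
  - exact: closed_eq_at continuous_det_snd.
apply/seteqP; split=> -[x th] /=.
  move=> [e1x [thth detth]]; split; [split|] => //.
    by rewrite /e1perp in e1x; rewrite e1x mxE.
  by move=> ij _; rewrite /= thth.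
move=> [[e1x thth] detth]; split; last split => //.
  by apply/matrixP => i j; rewrite (ord1 i) (ord1 j) e1x mxE.
by apply/matrixP => i j; exact: (thth (i, j)).
Qed.

Definition param_box (Y : R) : set (V * M) :=
  (row_box d Y `*` mx_box) `&` @gdom R d.

Lemma compact_param_box Y : compact (param_box Y).
Proof.
apply: compact_closedI; last exact: closed_gdom.
by apply: compact_setX; [exact: compact_row_box|exact: compact_mx_box].
Qed.

Lemma SOd1 : SOd (1%:M : M).
Proof. by split; [rewrite trmx1 mulmx1|rewrite det1]. Qed.

(* [gamma] extended to all of [V * M]; the value off [SO_d] is irrelevant. *)
Definition line_of (d0 : (0 < d)%N) (p : V * M) : L :=
  match pselect (SOd p.2) with
  | left SOp => exist _ (gamma_set p) (gamma_line d0 SOp)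
  | right _ => exist _ (gamma_set (0, 1%:M)) (@gamma_line R d (0, 1%:M) d0 SOd1)
  end.

Lemma line_ofE d0 p : SOd p.2 -> sval (line_of d0 p) = gamma_set p.
Proof. by rewrite /line_of; case: pselect. Qed.

Lemma continuous_line_of d0 : {within @gdom R d, continuous (line_of d0)}.
Proof.
apply/subspace_sigL_continuousP/continuousP => U oU.
rewrite (_ : _ @^-1` U = gamma_pre U) //.
apply/seteqP; split=> p /=; have /set_mem[_ SOp] := valP p.
  by move=> Up; exists (line_of d0 (set_val p)) => //; rewrite line_ofE.
case=> l Ul lp; suff -> : line_of d0 (set_val p) = l by [].
by apply: line_sval_inj; rewrite line_ofE.
Qed.

End line_parameters.

Section rotations.
Context {R : realType} {d : nat}.
Local Notation V := 'rV[R]_d.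
Local Notation M := 'M[R]_d.
Hypothesis d2 : (1 < d)%N.
Let d0 : (0 < d)%N := ltnW d2.

Lemma dot_e1 u : dot (e1 R d) u = u ord0 (Ordinal d0).
Proof.
rewrite /dot (bigD1 (Ordinal d0)) //= mxE eqxx mul1r big1 ?addr0 // => k k0.
rewrite mxE ifF ?mul0r //; apply: contraNF k0 => /eqP k0.
by apply/eqP/val_inj.
Qed.

(* [H = 1 - (2 / |w|^2) w^T w] with [w = e1 - v]. *)
Lemma householder_e1 (v : V) : dot v v = 1 ->
  exists H : M, [/\ H^T = H, H *m H = 1%:M & e1 R d *m H = v].
Proof.
move=> vv1; set w := e1 R d - v; set s := dot w w.
have sE : s = 2 - 2 * v ord0 (Ordinal d0).
  rewrite /s /w -[v in e1 R d - v]scale1r dotBZ !dot_e1 vv1 mxE eqxx; ring.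
set P := w^T *m w; set H := 1%:M - (2 / s) *: P.
have PP : P *m P = s *: P.
  by rewrite /P mulmxA -(mulmxA w^T w w^T) mul_row_tr mul_mx_scalar -scalemxAl.
exists H; split.
- by rewrite raddfB /= linearZ /= trmx_mul trmxK trmx1.
- have [s0|s0] := eqVneq s 0.
    by rewrite /H s0 invr0 mulr0 scale0r subr0 mulmx1.
  rewrite /H mulmxBl mul1mx mulmxBr mulmx1 -scalemxAl -scalemxAr PP !scalerA.
  have -> : 2 / s * (2 / s) * s = 2 / s + 2 / s by field.
  by apply/matrixP => i j; rewrite !mxE; ring.
have [s0|s0] := eqVneq s 0.
  have w0 : w = 0.
    by case: (eqVneq w 0) => // w0; have := dot_gt0 _ w0; rewrite -/s s0 ltxx.
  rewrite /H s0 invr0 mulr0 scale0r subr0 mulmx1.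
  by apply/eqP; rewrite -subr_eq0 -/w w0.
rewrite /H mulmxBr mulmx1 -scalemxAr /P mulmxA mul_row_tr mul_scalar_mx scalerA.
have -> : dot (e1 R d) w = 1 - v ord0 (Ordinal d0) by rewrite dot_e1 /w !mxE eqxx.
rewrite (_ : 2 / s * _ = 1) ?scale1r; first by rewrite /w opprB addrC subrK.
rewrite sE; move: s0; rewrite sE => s0; field.
by apply: contra s0 => /eqP v1; apply/eqP; rewrite -v1; ring.
Qed.

(* A reflection has determinant [+-1]; flipping the sign of the second
   coordinate, which [e1] does not see, corrects it to [1]. *)
Lemma rotation_e1 (v : V) : dot v v = 1 ->
  exists th : M, SOd th /\ e1 R d *m th^T = v.
Proof.
move=> vv1; have [H [HT HH e1H]] := householder_e1 _ vv1.
set del := \det H; set i1 := Ordinal d2.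
have del2 : del * del = 1 by rewrite /del -det_mulmx HH det1.
set D := diag_mx (\row_k (if k == i1 then del else 1)).
have DD : D *m D = 1%:M.
  rewrite mulmx_diag -diag_const_mx; congr diag_mx; apply/rowP => k.
  by rewrite !mxE; case: (k == i1); rewrite ?mulr1.
exists (H *m D); split; first split.
- by rewrite trmx_mul tr_diag_mx HT mulmxA -(mulmxA H) DD mulmx1 HH.
- rewrite det_mulmx det_diag (bigD1 i1) //= big1 ?mulr1; first by rewrite mxE eqxx.
  by move=> k /negbTE k1; rewrite mxE k1.
rewrite trmx_mul tr_diag_mx HT mulmxA -e1H; congr (_ *m _).
rewrite mul_mx_diag; apply/matrixP => i j; rewrite !mxE.
by case: (eqVneq j i1) => [->|_]; rewrite ?mulr1 //= mul0r.
Qed.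

Lemma SOd_entry_le1 (th : M) i j : SOd th -> `|th i j| <= 1.
Proof.
move=> [thth _]; have := unit_coord_le1 (row i th) j; rewrite mxE; apply.
have : (th *m th^T) i i = 1 by rewrite thth mxE eqxx.
rewrite mxE => <-; rewrite le_eqVlt; apply/orP; left.
by apply/eqP/eq_bigr => k _; rewrite !mxE.
Qed.

End rotations.

Section line_representation.
Context {R : realType} {d : nat}.
Local Notation V := 'rV[R]_d.
Local Notation M := 'M[R]_d.
Local Notation L := (line R d).
Hypothesis d2 : (1 < d)%N.
Let d0 : (0 < d)%N := ltnW d2.

Lemma line_unit_param {l : L} {a : V} : sval l a -> exists2 v : V,
  dot v v = 1 & sval l = [set a - dot a v *: v + t *: v | t in [set: R]].
Proof.
have [a0 [v0 [v00 lE]]] := svalP l; rewrite lE => -[t0 _ a0t0].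
have vv0 := dot_gt0 _ v00; set c := Num.sqrt (dot v0 v0).
have c0 : 0 < c by rewrite sqrtr_gt0.
have c2 : c ^+ 2 = dot v0 v0 by rewrite sqr_sqrtr // ltW.
have cn0 : c != 0 by rewrite gt_eqF.
exists (c^-1 *: v0); first by rewrite dotZ -c2 exprVn mulVf // expf_neq0.
rewrite -a0t0; set al := dot _ _.
apply/seteqP; split=> _ [t _ <-].
  by exists (al + (t - t0) * c) => //; apply/rowP => k; rewrite !mxE; field.
by exists (t0 + (t - al) / c) => //; apply/rowP => k; rewrite !mxE; field.
Qed.

(* Write [l = a1 + R v] with [|v| = 1] and [a1 = a - (a.v) v] orthogonal to [v],
   then rotate [e1] onto [v]: all coordinates stay bounded in terms of [Y]. *)
Lemma line_param_box {l : L} {a : V} {Y : R} : sval l a ->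
  (forall k, `|a ord0 k| <= Y) ->
  exists2 p, param_box (d%:R * (Y + d%:R * Y)) p & line_of d0 p = l.
Proof.
move=> la aY; have [v vv1 lE] := line_unit_param la.
have [th [SOth e1th]] := rotation_e1 d2 _ vv1.
set al := dot a v; set a1 := a - al *: v; set x := a1 *m th.
have v1 k : `|v ord0 k| <= 1 by apply: unit_coord_le1; rewrite vv1.
have al_le : `|al| <= d%:R * Y by apply: norm_sum_le => k; exact: normM_le1.
have a1_le k : `|a1 ord0 k| <= Y + d%:R * Y.
  rewrite !mxE; apply: le_trans (ler_normB _ _) _; apply: lerD => //.
  exact: normM_le1.
have xth : x *m th^T = a1 by rewrite -mulmxA (proj1 SOth) mulmx1.
exists (x, th); first split; first split.
- move=> j; rewrite mxE; apply: norm_sum_le => k.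
  by apply: normM_le1; [exact: a1_le|exact: SOd_entry_le1].
- by move=> i j; exact: SOd_entry_le1.
- split=> //; rewrite /e1perp /= /x -mulmxA -[th]trmxK -trmx_mul e1th.
  rewrite mul_row_tr dotBZl vv1 mulr1 subrr.
  by apply/matrixP => i j; rewrite !mxE mul0rn.
apply: line_sval_inj; rewrite line_ofE // lE /gamma_set /=.
apply/seteqP; split=> _ [t _ <-]; exists t => //;
  by rewrite mulmxDl xth -scalemxAl e1th.
Qed.

End line_representation.

Lemma open_vacant {R : realType} {d : nat} (w : set (line R d) -> \bar R) :
  (1 < d)%N -> Omega w -> open (vacant w).
Proof.
move=> d2 Ow; pose d0 : (0 < d)%N := ltnW d2.
rewrite openE => y yvac.
set Y := \sum_k `|y ord0 k| + 2.
set K := line_of d0 @` param_box (d%:R * (Y + d%:R * Y)).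
have cK : compact K.
  apply: continuous_compact; last exact: compact_param_box.
  by apply: continuous_subspaceW (continuous_line_of d0) => p [].
have far : nbhs y (\bigcap_(l in supp w `&` K) ~` cyl l).
  apply: filter_bigI_finite => [|l [wl _]]; first exact: Omega_supp_finite.
  apply: open_nbhs_nbhs; split; first by rewrite openC; exact: closed_cyl.
  by move=> yl; apply: yvac; exists l.
apply: filterS (filterI far (nbhsx_ballx y 1 ltr01)).
move=> z [zfar yz] [l wl [x lx zx]].
have x_le k : `|x ord0 k| <= Y.
  have zx1 : `|z ord0 k - x ord0 k| <= 1.
    by have := unit_coord_le1 (z - x) k; rewrite !mxE; apply; apply/enorm_le1.
  have yz1 : `|y ord0 k - z ord0 k| < 1.
    by move: yz => [_ /(_ ord0 k)]; rewrite -ball_normE.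
  have yY : `|y ord0 k| <= \sum_k `|y ord0 k|.
    by rewrite (bigD1 k) //= lerDl sumr_ge0.
  have -> : x ord0 k =
    y ord0 k - (y ord0 k - z ord0 k) - (z ord0 k - x ord0 k) by ring.
  have := ler_normB (y ord0 k) (y ord0 k - z ord0 k).
  have := ler_normB (y ord0 k - (y ord0 k - z ord0 k)) (z ord0 k - x ord0 k).
  rewrite /Y; lra.
have [p pK pl] := line_param_box d2 lx x_le.
by apply: (zfar l); [split=> //; exists p|exists x].
Qed.

(** * The connection event *)

Section vacant_chains.
Context {R : realType} {d : nat}.
Local Notation V := 'rV[R]_d.

Definition rchain := (@rball_index d * seq (@rball_index d))%type.

Definition chain_hull (c : rchain) : set V :=
  \bigcup_(t in [set t | t \in c.1 :: c.2]) rball t.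

Definition chain_joins (A B : set V) (c : rchain) : Prop :=
  exists x y, [/\ A x, B y & chain_in rball (chain_hull c) x y c.1 c.2].

Lemma vconnect_chains (A B : set V) : (1 < d)%N ->
  vconnect A B = \bigcup_(c in chain_joins A B)
    [set w | Omega w /\ w (hitting (chain_hull c)) = 0%E].
Proof.
move=> d2; apply/seteqP; split=> w.
  move=> [Ow [p [cp pvac Ap Bp]]].
  have [s [r chain]] : exists s r, chain_in rball (vacant w) (p 0) (p 1) s r.
    have in01 t : 0 <= t <= 1 -> (p @` `[0, 1]) (p t) by exists t; rewrite ?in_itv.
    apply: (connected_chain _ rball_open _ (p @` `[0, 1])).
    - by move=> z; apply: rball_base; exact: open_vacant.
    - exact: connected_continuous_connected (@segment_connected R 0 1) cp.
    - by move=> _ [t t01 <-]; exact: pvac.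
    - by apply: in01; rewrite lexx ler01.
    - by apply: in01; rewrite lexx ler01.
  have hull_vac : chain_hull (s, r) `<=` vacant w.
    by move=> z [t /= tsr tz]; case: chain => _ _ rvac _; exact: rvac t tsr z tz.
  exists (s, r); last by split=> //; exact/hitting_null.
  exists (p 0), (p 1); split=> //.
  by case: chain => sx sr _ ry; split=> // t tsr z tz; exists t.
move=> [[s r] [x [y [Ax By chain]]] [Ow /(hitting_null _ _ Ow) hull_vac]].
have [p [cp pvac p0 p1]] : path_in (vacant w) x y.
  apply: (chain_path_in _ rball_path_in).
  by apply: chain_in_sub chain.
by split=> //; exists p; split; rewrite ?p0 ?p1 //; exact: continuous_subspaceT.
Qed.

Lemma calA_hitting_null (S : set V) : (0 < d)%N -> open S ->
  calA [set w | Omega w /\ w (hitting S) = 0%E].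
Proof.
move=> d0 oS; apply: sub_sigma_algebra; exists (hitting S), [set 0%E]; split=> //.
by apply: sub_sigma_algebra; exact: open_hitting.
Qed.

End vacant_chains.

Theorem lemma2p3 (R : realType) (d : nat) (u : R) :
  (3 <= d)%N -> 0 < u ->
  forall A B : set 'rV[R]_d, calA (vconnect A B).
Proof.
move=> d3 _ A B; have d2 : (1 < d)%N := ltnW d3.
rewrite (vconnect_chains A B d2); apply: sigma_algebra_bigcup_countable => c _.
apply: calA_hitting_null (ltnW d2) _.
by apply: bigcup_open => t _; exact: rball_open.
Qed.
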